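(* Let $R$ be a unital ring, and let $S\subseteq R$ be a subring with $1\in S$ such that $S$ is generated by its commutators (so that $\xi(S)$ is defined). Then $\xi(R)\leq 15\,\xi(S)^3$; that is, every element of $R$ is a sum of $15\,\xi(S)^3$ elements of the form $[b,c][d,e]$ with $b,c,d,e\in R$.
   Context: $[x,y]=xy-yx$. For a unital ring $T$ generated by its commutators (as an ideal, equivalently as a ring), $\xi(T)$ is the minimal $N\in\mathbb{N}$ such that every element of $T$ is a sum of $N$ elements of the form $[b,c][d,e]$ with $b,c,d,e\in T$. *)

From mathcomp Require Import all_boot all_algebra.
Set Implicit Arguments. Unset Strict Implicit. Unset Printing Implicit Defensive.
Import GRing.Theory.
Local Open Scope ring_scope.

Definition comm (R : pzRingType) (x y : R) : R := x * y - y * x.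

Definition sum_comm_prods (R : pzRingType) (T : {pred R}) (N : nat) (x : R)
  : Prop :=
  exists b c d e : 'I_N -> R,
    (forall i, [/\ b i \in T, c i \in T, d i \in T & e i \in T]) /\
    x = \sum_(i < N) comm (b i) (c i) * comm (d i) (e i).

Definition xi_eq (R : pzRingType) (T : {pred R}) (N : nat) : Prop :=
  (forall x, x \in T -> sum_comm_prods T N x) /\
  (forall M, (forall x, x \in T -> sum_comm_prods T M x) -> (N <= M)%N).

(** Write 1 = sum_i [a_i,b_i][c_i,d_i] with a_i, b_i, c_i, d_i in S, so that
    x = sum_i [a_i,b_i] ([c_i,d_i] x); it remains to write [a,b] y, for a, b in S
    and arbitrary y, as a short sum of products of two commutators.  Expanding
    a = sum_j [p_j,q_j][r_j,t_j] and applying the Leibniz rule, everything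
    reduces to two facts.  First, [z,s] with s in S is a sum of 2 xi(S) such
    products: expand s and apply the Leibniz rule.  Second, for P = [p,q] in S,
    the identity [P,b] Z = [Z,bP] - [bZ,P] - [Z,b] P moves the arbitrary factor
    Z into commutators with elements of S.  Counting gives
    xi(S)^2 (10 xi(S) + 2) <= 15 xi(S)^3 terms. *)

From mathcomp Require Import all_boot all_algebra.
From mathcomp Require Import zify.
Set Implicit Arguments. Unset Strict Implicit. Unset Printing Implicit Defensive.
Import GRing.Theory.
Local Open Scope ring_scope.

Section CommutatorIdentities.
Variable R : pzRingType.
Implicit Types x y z b P Z : R.

Lemma commC x y : comm y x = - comm x y.
Proof. by rewrite /comm opprB. Qed.

Lemma commxx x : comm x x = 0.
Proof. exact: subrr. Qed.

Lemma commMr x y z : comm x (y * z) = comm x y * z + y * comm x z.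
Proof. by rewrite /comm mulrBl mulrBr !mulrA addrA subrK. Qed.

Lemma commMl x y z : comm (x * y) z = x * comm y z + comm x z * y.
Proof. by rewrite /comm mulrBl mulrBr !mulrA addrA subrK. Qed.

Lemma comm_sumr I (r : seq I) (F : I -> R) x :
  comm x (\sum_(i <- r) F i) = \sum_(i <- r) comm x (F i).
Proof. by rewrite /comm mulr_sumr mulr_suml -sumrB. Qed.

Lemma comm_suml I (r : seq I) (F : I -> R) x :
  comm (\sum_(i <- r) F i) x = \sum_(i <- r) comm (F i) x.
Proof. by rewrite /comm mulr_sumr mulr_suml -sumrB. Qed.

Lemma mulr_commE x y : x * y = y * x - comm y x.
Proof. by rewrite /comm opprB addrC subrK. Qed.

Lemma comm_mul_rearrange P b Z :
  comm P b * Z = comm Z (b * P) - comm (b * Z) P - comm Z b * P.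
Proof.
rewrite commMr commMl opprD addrA addrK (commC P b) mulNr opprK.
by rewrite addrAC subrr add0r.
Qed.

End CommutatorIdentities.

Section SumCommProds.
Variables (R : pzRingType) (T : {pred R}).
Implicit Types x y : R.

Lemma sum_comm_prods0 : sum_comm_prods T 0 0.
Proof.
exists (fun _ => 0), (fun _ => 0), (fun _ => 0), (fun _ => 0).
by split; [case | rewrite big_ord0].
Qed.

Lemma sum_comm_prods1 b c d e :
  b \in T -> c \in T -> d \in T -> e \in T ->
  sum_comm_prods T 1 (comm b c * comm d e).
Proof.
move=> bT cT dT eT; exists (fun _ => b), (fun _ => c), (fun _ => d), (fun _ => e).
by split; [| rewrite big_ord1].
Qed.

Lemma sum_comm_prodsD m n x y :
  sum_comm_prods T m x -> sum_comm_prods T n y ->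
  sum_comm_prods T (m + n) (x + y).
Proof.
move=> [b [c [d [e [memT ->]]]]] [b' [c' [d' [e' [memT' ->]]]]].
pose glue (f : 'I_m -> R) (g : 'I_n -> R) i :=
  match split i with inl j => f j | inr k => g k end.
exists (glue b b'), (glue c c'), (glue d d'), (glue e e'); split.
  by move=> i; rewrite /glue; case: split.
rewrite big_split_ord /glue; congr (_ + _); apply: eq_bigr => i _.
  by rewrite (unsplitK (inl _ i) : split (lshift n i) = inl i).
by rewrite (unsplitK (inr _ i) : split (rshift m i) = inr i).
Qed.

(* Negation swaps the two entries of the first commutator, so [T] need not be
   closed under opposites. *)
Lemma sum_comm_prodsN n x : sum_comm_prods T n x -> sum_comm_prods T n (- x).
Proof.
move=> [b [c [d [e [memT ->]]]]]; exists c, b, d, e; split.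
  by move=> i; have [bT cT dT eT] := memT i; split.
by rewrite -sumrN; apply: eq_bigr => i _; rewrite commC mulNr opprK.
Qed.

Lemma sum_comm_prodsB m n x y :
  sum_comm_prods T m x -> sum_comm_prods T n y ->
  sum_comm_prods T (m + n) (x - y).
Proof. by move=> Px Py; exact: sum_comm_prodsD Px (sum_comm_prodsN Py). Qed.

Lemma sum_comm_prods_sum m n (F : 'I_n -> R) :
  (forall i, sum_comm_prods T m (F i)) ->
  sum_comm_prods T (n * m) (\sum_(i < n) F i).
Proof.
elim: n F => [|n IHn] F PF; first by rewrite big_ord0; exact: sum_comm_prods0.
by rewrite big_ord_recr mulSnr; apply: sum_comm_prodsD; [apply: IHn |].
Qed.

Lemma sum_comm_prods_widen t m n x :
  t \in T -> (m <= n)%N -> sum_comm_prods T m x -> sum_comm_prods T n x.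
Proof.
move=> tT le_mn Px; rewrite -(subnKC le_mn) -[x]addr0.
apply: sum_comm_prodsD Px _; rewrite -[(n - m)%N]muln1.
have := sum_comm_prods_sum (fun _ : 'I_(n - m) => sum_comm_prods1 tT tT tT tT).
by rewrite commxx mul0r big1.
Qed.

End SumCommProds.

Lemma sum_comm_prods_commr (R : pzRingType) (T : {pred R}) n (s z : R) :
  sum_comm_prods T n s -> sum_comm_prods predT (n * 2) (comm z s).
Proof.
move=> [b [c [d [e [_ ->]]]]]; rewrite comm_sumr.
apply: sum_comm_prods_sum => i; rewrite commMr.
by apply: (@sum_comm_prodsD _ _ 1 1); apply: sum_comm_prods1.
Qed.

Section CommutatorGeneratedSubring.
Variables (R : pzRingType) (S : {pred R}) (N : nat).
Hypothesis subS : forall x y, x \in S -> y \in S -> x - y \in S.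
Hypothesis mulS : forall x y, x \in S -> y \in S -> x * y \in S.
Hypothesis sum_comm_prodsS : forall s, s \in S -> sum_comm_prods S N s.
Implicit Types a b p q r t z : R.

Lemma commS p q : p \in S -> q \in S -> comm p q \in S.
Proof. by move=> pS qS; apply: subS; apply: mulS. Qed.

Lemma sum_comm_prods_commrS z s :
  s \in S -> sum_comm_prods predT (N * 2) (comm z s).
Proof. by move=> sS; apply: sum_comm_prods_commr (sum_comm_prodsS sS). Qed.

Lemma sum_comm_prods_comm2_mul p q b z :
  p \in S -> q \in S -> b \in S ->
  sum_comm_prods predT (N * 2 + N * 2 + 1) (comm (comm p q) b * z).
Proof.
move=> pS qS bS; have pqS := commS pS qS.
rewrite comm_mul_rearrange; apply: sum_comm_prodsB; last exact: sum_comm_prods1.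
by apply: sum_comm_prodsB; apply: sum_comm_prods_commrS => //; apply: mulS.
Qed.

Lemma sum_comm_prods_comm4_mul p q r t b z :
  p \in S -> q \in S -> r \in S -> t \in S -> b \in S ->
  sum_comm_prods predT (N * 10 + 2) (comm (comm p q * comm r t) b * z).
Proof.
move=> pS qS rS tS bS.
have -> : (N * 10 + 2 = (N * 2 + N * 2 + 1 + N * 2) + (N * 2 + N * 2 + 1))%N.
  by lia.
rewrite commMl mulrDl -!mulrA; apply: sum_comm_prodsD.
  rewrite mulr_commE -mulrA; apply: sum_comm_prodsB.
    exact: sum_comm_prods_comm2_mul.
  exact/sum_comm_prods_commrS/commS.
exact: sum_comm_prods_comm2_mul.
Qed.

Lemma sum_comm_prods_comm_mul a b z :
  a \in S -> b \in S -> sum_comm_prods predT (N * (N * 10 + 2)) (comm a b * z).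
Proof.
move=> aS bS; have [p [q [r [t [memS ->]]]]] := sum_comm_prodsS aS.
rewrite comm_suml mulr_suml; apply: sum_comm_prods_sum => i.
by have [pS qS rS tS] := memS i; exact: sum_comm_prods_comm4_mul.
Qed.

End CommutatorGeneratedSubring.

Theorem proposition5p12 (R : pzRingType) (S : {pred R})
  (S1 : 1 \in S)
  (SB : forall x y, x \in S -> y \in S -> x - y \in S)
  (SM : forall x y, x \in S -> y \in S -> x * y \in S)
  (N : nat) (hxiS : xi_eq S N) :
  forall x : R, sum_comm_prods (predT : {pred R}) (15 * N ^ 3)%N x.
Proof.
move=> x; have [sum_comm_prodsS _] := hxiS.
have [a [b [c [d [memS one_eq]]]]] := sum_comm_prodsS 1 S1.
have -> : x = \sum_(i < N) comm (a i) (b i) * (comm (c i) (d i) * x).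
  by rewrite -[LHS]mul1r {1}one_eq mulr_suml; apply: eq_bigr => i _; rewrite mulrA.
apply: (@sum_comm_prods_widen _ _ 0 (N * (N * (N * 10 + 2)))) => //.
  by rewrite !expnS expn0; nia.
apply: sum_comm_prods_sum => i; have [aS bS _ _] := memS i.
exact: (sum_comm_prods_comm_mul SB SM sum_comm_prodsS).
Qed.
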